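(* For a thermodynamic Stephani universe, the fluid velocity $u$ satisfies $\sigma=0$ and $d\!\left[\mathbf a-\frac13\theta u\right]=0$ (i.e. the comoving observer can measure isotropic radiation) if and only if $b''(R)=0$, i.e. $b(R)=b_1+b_2R$ with constants $b_1,b_2$. In that case the function $\beta=R\alpha$ satisfies $d\ln\beta=\mathbf a-\frac13\theta u$, and the test radiation fluid has $\rho_r=3p_r=a_R\Theta_r^4$ with $\Theta_r=\Theta_0\frac{R_0}{R}\left[1+\frac{b_2wR}{1+b_1w}\right]$.
   Context: Thermodynamic Stephani universe: $ds^2=-\alpha^2dt^2+\Omega^2(dx^2+dy^2+dz^2)$ with $L=R(t)/(1+b(t)w)$, $\Omega=\frac{w}{2z}L$, $\alpha=R\,\partial_R\ln L=\frac{1+(b-Rb')w}{1+bw}$, $w=2z/(1+\frac\varepsilon4 r^2)$, $r^2=x^2+y^2+z^2$, $\varepsilon\in\{0,\pm1\}$; functions of $t$ regarded as functions of $R$ (prime $=d/dR$, $\dot R\neq0$). $u=\alpha^{-1}\partial_t$ (as a 1-form $u=-\alpha\,dt$), $\sigma$ its shear, $\mathbf a$ its acceleration, $\theta=3\dot R/R$ its expansion; $a_R,\Theta_0,R_0$ are constants. *)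

From Stdlib Require Import Reals.
From Coquelicot Require Import Coquelicot.
Open Scope R_scope.

(** Spacetime points in coordinates (t,x,y,z) = (p 0, p 1, p 2, p 3);
    coordinates with index >= 4 are never used. *)
Definition pt := nat -> R.
Definition upd (p : pt) (mu : nat) (s : R) : pt :=
  fun k => if Nat.eqb k mu then s else p k.
Definition pd (mu : nat) (f : pt -> R) (p : pt) : R :=
  Derive (fun s => f (upd p mu s)) (p mu).
Definition sum4 (f : nat -> R) : R := f 0%nat + f 1%nat + f 2%nat + f 3%nat.

(** Data of a thermodynamic Stephani universe: curvature index eps,
    scale factor R(t), and b regarded as a function B of R (b(t) = B(R(t))). *)
Record SU := mkSU { eps : R; Rf : R -> R; B : R -> R }.

Section Model.
Variable S : SU.

Definition r2 (p : pt) : R := p 1%nat ^ 2 + p 2%nat ^ 2 + p 3%nat ^ 2.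
Definition Fden (p : pt) : R := 1 + eps S / 4 * r2 p.
Definition w (p : pt) : R := 2 * p 3%nat / Fden p.
Definition Rt (p : pt) : R := Rf S (p 0%nat).
Definition L (p : pt) : R := Rt p / (1 + B S (Rt p) * w p).
(** Omega = w/(2z) L, written in the equivalent form L/(1 + eps r^2/4)
    (no 0/0 at z = 0). *)
Definition Om (p : pt) : R := L p / Fden p.
Definition alpha (p : pt) : R :=
  (1 + (B S (Rt p) - Rt p * Derive (B S) (Rt p)) * w p) / (1 + B S (Rt p) * w p).

Definition g (mu nu : nat) (p : pt) : R :=
  if Nat.eqb mu nu then (if Nat.eqb mu 0 then - alpha p ^ 2 else Om p ^ 2) else 0.
Definition ginv (mu nu : nat) (p : pt) : R :=
  if Nat.eqb mu nu then / g mu mu p else 0.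

Definition Gam (lam mu nu : nat) (p : pt) : R :=
  / 2 * sum4 (fun s => ginv lam s p *
     (pd mu (g s nu) p + pd nu (g s mu) p - pd s (g mu nu) p)).

(** fluid velocity: as a 1-form u = -alpha dt; vector u^mu by raising *)
Definition ul (mu : nat) (p : pt) : R := if Nat.eqb mu 0 then - alpha p else 0.
Definition uu (mu : nat) (p : pt) : R := sum4 (fun nu => ginv mu nu p * ul nu p).

Definition Du (nu mu : nat) (p : pt) : R :=
  pd nu (ul mu) p - sum4 (fun lam => Gam lam nu mu p * ul lam p).
Definition acc (mu : nat) (p : pt) : R := sum4 (fun nu => uu nu p * Du nu mu p).
Definition theta (p : pt) : R :=
  sum4 (fun mu => sum4 (fun nu => ginv mu nu p * Du mu nu p)).
Definition hproj (mu nu : nat) (p : pt) : R := g mu nu p + ul mu p * ul nu p.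
Definition shear (mu nu : nat) (p : pt) : R :=
  / 2 * (Du mu nu p + Du nu mu p) + / 2 * (acc mu p * ul nu p + acc nu p * ul mu p)
  - theta p / 3 * hproj mu nu p.
Definition omega1 (mu : nat) (p : pt) : R := acc mu p - theta p / 3 * ul mu p.
Definition dform (mu nu : nat) (p : pt) : R :=
  pd mu (omega1 nu) p - pd nu (omega1 mu) p.
Definition beta (p : pt) : R := Rt p * alpha p.

Definition Tup (rho pr : pt -> R) (mu nu : nat) (p : pt) : R :=
  (rho p + pr p) * uu mu p * uu nu p + pr p * ginv mu nu p.
Definition divT (T : nat -> nat -> pt -> R) (nu : nat) (p : pt) : R :=
  sum4 (fun mu => pd mu (T mu nu) p
        + sum4 (fun lam => Gam mu mu lam p * T lam nu p + Gam nu mu lam p * T mu lam p)).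

Definition Thetar (b1 b2 Th0 R0 : R) (p : pt) : R :=
  Th0 * R0 / Rt p * (1 + b2 * w p * Rt p / (1 + b1 * w p)).

Definition InD (t1 t2 : R) (p : pt) : Prop :=
  t1 < p 0%nat < t2 /\ Fden p <> 0 /\ 1 + B S (Rt p) * w p <> 0 /\ 0 < alpha p.

End Model.

From Stdlib Require Import Reals Lra Lia FunctionalExtensionality.
From Coquelicot Require Import Coquelicot.
Open Scope R_scope.

(* The metric is diagonal with lapse alpha and isotropic spatial factor Omega,
   so everything reduces to logarithmic derivatives of alpha and Omega: u is
   shear free for every b, the 1-form a - theta u/3 has components
   (d_t Omega/Omega, d_k alpha/alpha), and the conservation law of a comoving
   perfect fluid splits into the energy equation d_t rho + 3 (rho + p) d_t Omega/Omega = 0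
   and the Euler equations d_k p + (rho + p) d_k alpha/alpha = 0.
   Writing alpha = N/D with D = 1 + b w and N = 1 + (b - R b') w, one finds
   d_t(d_k alpha/alpha) - d_k(d_t Omega/Omega) = - R' R b'' d_k w / N^2, while the
   purely spatial components of the exterior derivative vanish by symmetry of the
   second derivatives of w.  On the axis x = y = z = 0 we have w = 0 and d_z w = 2,
   so the 1-form is closed iff b'' = 0.  For b = b1 + b2 R one has N = 1 + b1 w,
   beta = R N/D, Theta_r = Theta_0 R_0/beta, and both conservation equations
   follow from d ln beta = a - theta u/3. *)

Lemma upd_id (p : pt) k : upd p k (p k) = p.
Proof.
  apply functional_extensionality; intro j; unfold upd.
  destruct (Nat.eqb j k) eqn:E; [apply Nat.eqb_eq in E; subst|]; reflexivity.
Qed.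

Definition coord_line (f : pt -> R) (p : pt) (k : nat) : R -> R := fun s => f (upd p k s).

Lemma pd_coord_line k f p : pd k f p = Derive (coord_line f p k) (p k).
Proof. reflexivity. Qed.

Lemma Derive_opp_sqr (a : R -> R) x : ex_derive a x ->
  Derive (fun s => - a s ^ 2) x = - (2 * a x * Derive (fun s => a s) x).
Proof. intro H. apply is_derive_unique; auto_derive; [tauto | ring]. Qed.

Lemma Derive_sqr (a : R -> R) x : ex_derive a x ->
  Derive (fun s => a s ^ 2) x = 2 * a x * Derive (fun s => a s) x.
Proof. intro H. apply is_derive_unique; auto_derive; [tauto | ring]. Qed.

Lemma Derive_opp_fun (a : R -> R) x : ex_derive a x ->
  Derive (fun s => - a s) x = - Derive (fun s => a s) x.
Proof. intro H. apply is_derive_unique; auto_derive; [tauto | ring]. Qed.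

Lemma locally_Rabs_lt (P : R -> Prop) x (e : posreal) :
  (forall y, Rabs (y - x) < e -> P y) -> locally x P.
Proof.
  intro H. exists e; intros y Hy. apply H.
  unfold ball in Hy; simpl in Hy; unfold AbsRing_ball, abs, minus, plus, opp in Hy.
  exact Hy.
Qed.

Lemma locally_neq0 (h : R -> R) x : ex_derive h x -> h x <> 0 -> locally x (fun y => h y <> 0).
Proof.
  intros Hd Hn. apply ex_derive_continuous in Hd.
  assert (Hp : 0 < Rabs (h x)) by (apply Rabs_pos_lt; exact Hn).
  apply (Hd (fun z => z <> 0)), (locally_Rabs_lt _ _ (mkposreal _ Hp)); intros z Hz Hz0.
  simpl in Hz. rewrite Hz0, Rminus_0_l, Rabs_Ropp in Hz. lra.
Qed.

Lemma locally_open_interval a b x : a < x < b -> locally x (fun y => a < y < b).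
Proof.
  intro H. assert (Hp : 0 < Rmin (x - a) (b - x)) by (apply Rmin_pos; lra).
  apply (locally_Rabs_lt _ _ (mkposreal _ Hp)); intros y Hy; simpl in Hy.
  apply Rabs_def2 in Hy.
  pose proof (Rmin_l (x - a) (b - x)). pose proof (Rmin_r (x - a) (b - x)). lra.
Qed.

Ltac ex_derive_of_is_derive :=
  match goal with H : is_derive ?f ?x ?v |- ex_derive _ ?x => exists v; exact H end.
Ltac neq0 := repeat (match goal with
  | |- _ * _ <> 0 => apply Rmult_integral_contrapositive_currified
  | |- / _ <> 0 => apply Rinv_neq_0_compat
  | |- 1 <> 0 => exact R1_neq_R0 end); auto.
Ltac side_conditions := repeat split; auto; try ex_derive_of_is_derive; try neq0.
Ltac rewrite_is_derive :=
  repeat match goal with H : is_derive ?f ?x ?v |- context [Derive (fun y => ?f y) ?x] =>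
    change (Derive (fun y => f y) x) with (Derive f x); rewrite (is_derive_unique f x v H) end.

Section DiagonalMetric.
Variable S : SU.
Variable p : pt.
Hypothesis alpha_derivable : forall k, (k < 4)%nat -> ex_derive (coord_line (alpha S) p k) (p k).
Hypothesis Om_derivable : forall k, (k < 4)%nat -> ex_derive (coord_line (Om S) p k) (p k).
Hypothesis alpha_neq0 : alpha S p <> 0.
Hypothesis Om_neq0 : Om S p <> 0.

Definition pd_g_diag (m n k : nat) : R :=
  if Nat.eqb m n then (if Nat.eqb m 0 then - (2 * alpha S p * pd k (alpha S) p)
                       else 2 * Om S p * pd k (Om S) p) else 0.
Definition ginv_diag (m : nat) : R :=
  if Nat.eqb m 0 then / (- alpha S p ^ 2) else / (Om S p ^ 2).

Lemma pd_g k m n : (k < 4)%nat -> pd k (g S m n) p = pd_g_diag m n k.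
Proof.
  intro Hk. unfold pd_g_diag, g. destruct (Nat.eqb m n); [destruct (Nat.eqb m 0)|].
  - transitivity (Derive (fun s => - coord_line (alpha S) p k s ^ 2) (p k)); [reflexivity|].
    rewrite Derive_opp_sqr by auto. unfold coord_line; rewrite upd_id; reflexivity.
  - transitivity (Derive (fun s => coord_line (Om S) p k s ^ 2) (p k)); [reflexivity|].
    rewrite Derive_sqr by auto. unfold coord_line; rewrite upd_id; reflexivity.
  - exact (Derive_const 0 _).
Qed.

Lemma pd_ul k m : (k < 4)%nat ->
  pd k (ul S m) p = if Nat.eqb m 0 then - pd k (alpha S) p else 0.
Proof.
  intro Hk. unfold ul. destruct (Nat.eqb m 0).
  - transitivity (Derive (fun s => - coord_line (alpha S) p k s) (p k)); [reflexivity|].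
    rewrite Derive_opp_fun by auto. reflexivity.
  - exact (Derive_const 0 _).
Qed.

Lemma ginv_diag_eq m : ginv S m m p = ginv_diag m.
Proof. unfold ginv, ginv_diag, g. rewrite Nat.eqb_refl. destruct (Nat.eqb m 0); reflexivity. Qed.

Lemma Gam_diag lam mu nu : (lam < 4)%nat -> (mu < 4)%nat -> (nu < 4)%nat ->
  Gam S lam mu nu p
  = / 2 * ginv_diag lam * (pd_g_diag lam nu mu + pd_g_diag lam mu nu - pd_g_diag mu nu lam).
Proof.
  intros Hl Hm Hn. unfold Gam, sum4. rewrite !pd_g by lia.
  destruct lam as [|[|[|[|]]]]; try lia; rewrite <- ginv_diag_eq; cbv [ginv Nat.eqb]; ring.
Qed.

Ltac expand_diag :=
  repeat (rewrite Gam_diag by lia); repeat (rewrite pd_ul by lia);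
  cbv [pd_g_diag ginv_diag ginv g ul Nat.eqb]; field; auto.

Lemma shear_eq0 mu nu : (mu < 4)%nat -> (nu < 4)%nat -> shear S mu nu p = 0.
Proof.
  intros Hm Hn. unfold shear, hproj, acc, theta, uu, Du, sum4.
  destruct mu as [|[|[|[|]]]]; try lia; destruct nu as [|[|[|[|]]]]; try lia; expand_diag.
Qed.

Lemma omega1_diag mu : (mu < 4)%nat ->
  omega1 S mu p = if Nat.eqb mu 0 then pd 0 (Om S) p / Om S p else pd mu (alpha S) p / alpha S p.
Proof.
  intro Hm. unfold omega1, acc, theta, uu, Du, sum4.
  destruct mu as [|[|[|[|]]]]; try lia; expand_diag.
Qed.

Section PerfectFluid.
Variables rho pr : pt -> R.
Hypothesis rho_derivable : forall k, (k < 4)%nat -> ex_derive (coord_line rho p k) (p k).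
Hypothesis pr_derivable : forall k, (k < 4)%nat -> ex_derive (coord_line pr p k) (p k).

Lemma Tup_diag_at q m n : (m < 4)%nat -> (n < 4)%nat ->
  Tup S rho pr m n q = if Nat.eqb m n then (if Nat.eqb m 0 then
     (rho q + pr q) * (/ - alpha S q ^ 2 * - alpha S q) * (/ - alpha S q ^ 2 * - alpha S q)
      + pr q * / - alpha S q ^ 2 else pr q * / (Om S q ^ 2)) else 0.
Proof.
  intros Hm Hn. unfold Tup, uu, sum4.
  destruct m as [|[|[|[|]]]]; try lia; destruct n as [|[|[|[|]]]]; try lia;
  cbv [ginv g ul Nat.eqb]; ring.
Qed.

Lemma Derive_T00 (a r q : R -> R) x :
  ex_derive a x -> ex_derive r x -> ex_derive q x -> a x <> 0 ->
  Derive (fun s => (r s + q s) * (/ - a s ^ 2 * - a s) * (/ - a s ^ 2 * - a s) + q s * / - a s ^ 2) x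
  = Derive (fun s => r s) x / a x ^ 2 - 2 * r x * Derive (fun s => a s) x / a x ^ 3.
Proof.
  intros Ha Hr Hq Hnz. apply is_derive_unique; auto_derive.
  - repeat split; auto; intro; apply Hnz; nra.
  - field; auto.
Qed.

Lemma Derive_Tkk (o q : R -> R) x : ex_derive o x -> ex_derive q x -> o x <> 0 ->
  Derive (fun s => q s * / (o s ^ 2)) x
  = Derive (fun s => q s) x / o x ^ 2 - 2 * q x * Derive (fun s => o s) x / o x ^ 3.
Proof.
  intros Ho Hq Hnz. apply is_derive_unique; auto_derive.
  - repeat split; auto; intro; apply Hnz; nra.
  - field; auto.
Qed.

Lemma pd_Tup k m n : (k < 4)%nat -> (m < 4)%nat -> (n < 4)%nat ->
  pd k (Tup S rho pr m n) p = if Nat.eqb m n then (if Nat.eqb m 0 then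
     pd k rho p / alpha S p ^ 2 - 2 * rho p * pd k (alpha S) p / alpha S p ^ 3
   else pd k pr p / Om S p ^ 2 - 2 * pr p * pd k (Om S) p / Om S p ^ 3) else 0.
Proof.
  intros Hk Hm Hn. unfold pd at 1.
  rewrite (Derive_ext _ (fun s => if Nat.eqb m n then (if Nat.eqb m 0 then
     (coord_line rho p k s + coord_line pr p k s)
       * (/ - coord_line (alpha S) p k s ^ 2 * - coord_line (alpha S) p k s)
       * (/ - coord_line (alpha S) p k s ^ 2 * - coord_line (alpha S) p k s)
      + coord_line pr p k s * / - coord_line (alpha S) p k s ^ 2
     else coord_line pr p k s * / (coord_line (Om S) p k s ^ 2)) else 0))
   by (intro s; apply Tup_diag_at; auto).
  destruct (Nat.eqb m n); [destruct (Nat.eqb m 0)|].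
  - rewrite Derive_T00; auto; unfold coord_line; rewrite upd_id; auto.
  - rewrite Derive_Tkk; auto; unfold coord_line; rewrite upd_id; auto.
  - exact (Derive_const 0 _).
Qed.

Lemma divT_diag nu : (nu < 4)%nat ->
  divT S (Tup S rho pr) nu p = if Nat.eqb nu 0 then
    (pd 0 rho p + 3 * pd 0 (Om S) p / Om S p * (rho p + pr p)) / alpha S p ^ 2
  else (pd nu pr p + (rho p + pr p) * pd nu (alpha S) p / alpha S p) / Om S p ^ 2.
Proof.
  intro Hn. unfold divT, sum4. rewrite !Tup_diag_at by lia. rewrite !pd_Tup by lia.
  destruct nu as [|[|[|[|]]]]; try lia; expand_diag.
Qed.

End PerfectFluid.
End DiagonalMetric.

Lemma is_derive_mobius (v : R -> R) x dv b c : is_derive v x dv -> 1 + b * v x <> 0 ->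
  is_derive (fun s => (1 + c * v s) / (1 + b * v s)) x ((c - b) * dv / (1 + b * v x) ^ 2).
Proof. intros H HD. auto_derive; [side_conditions|]. rewrite_is_derive. field; auto. Qed.

Lemma is_derive_conformal (v F : R -> R) x dv dF b r : is_derive v x dv -> is_derive F x dF ->
  1 + b * v x <> 0 -> F x <> 0 ->
  is_derive (fun s => r / (1 + b * v s) / F s) x
    (- (r * b * dv) / ((1 + b * v x) ^ 2 * F x) - r * dF / ((1 + b * v x) * F x ^ 2)).
Proof. intros H H' HD HF. auto_derive; [side_conditions|]. rewrite_is_derive. field; auto. Qed.

Lemma is_derive_log_conformal (v F : R -> R) x dv dF dr b c r :
  is_derive v x dv -> is_derive F x dF -> 1 + b * v x <> 0 -> F x <> 0 -> r <> 0 ->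
  is_derive (fun s => dr * (1 + c * v s) / ((1 + b * v s) ^ 2 * F s) / (r / (1 + b * v s) / F s)) x
    (dr / r * (c - b) * dv / (1 + b * v x) ^ 2).
Proof. intros H H' HD HF HR. auto_derive; [side_conditions|]. rewrite_is_derive. field; auto. Qed.

Lemma is_derive_log_mobius (v dv : R -> R) x dvx ddv K b c :
  is_derive v x dvx -> is_derive dv x ddv -> 1 + b * v x <> 0 -> 1 + c * v x <> 0 ->
  is_derive (fun s => K * dv s / (1 + b * v s) ^ 2 / ((1 + c * v s) / (1 + b * v s))) x
    (K * (ddv * ((1 + b * v x) * (1 + c * v x))
          - dv x * dvx * (b * (1 + c * v x) + c * (1 + b * v x)))
       / ((1 + b * v x) * (1 + c * v x)) ^ 2).
Proof. intros H H' HD HN. auto_derive; [side_conditions|]. rewrite_is_derive. field; auto. Qed.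

Lemma is_derive_ln_mult (r a : R -> R) x dr da : is_derive r x dr -> is_derive a x da ->
  0 < r x * a x ->
  is_derive (fun s => ln (r s * a s)) x ((dr * a x + r x * da) / (r x * a x)).
Proof.
  intros H1 H2 Hp. auto_derive; [side_conditions|]. rewrite_is_derive.
  field. split; intro Hc; rewrite Hc in Hp; lra.
Qed.

Lemma is_derive_temperature (v : R -> R) x dv c b1 b2 r :
  is_derive v x dv -> 1 + b1 * v x <> 0 -> r <> 0 ->
  is_derive (fun s => c / r * (1 + b2 * v s * r / (1 + b1 * v s))) x
    (c * b2 * dv / (1 + b1 * v x) ^ 2).
Proof. intros H1 H2 H3. auto_derive; [side_conditions|]. rewrite_is_derive. field; auto. Qed.

Lemma is_derive_pow4 (th : R -> R) x d c : is_derive th x d ->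
  is_derive (fun s => c * th s ^ 4) x (c * 4 * th x ^ 3 * d).
Proof. intro H. auto_derive; [side_conditions|]. rewrite_is_derive. ring. Qed.

Section Stephani.
Variables (eps0 : R) (R0f B0 : R -> R) (t1 t2 : R).
Hypothesis R_pos : forall t, t1 < t < t2 -> 0 < R0f t.
Hypothesis R_smooth : forall t n, t1 < t < t2 -> ex_derive_n R0f n t.
Hypothesis B_smooth : forall t n, t1 < t < t2 -> ex_derive_n B0 n (R0f t).
Notation U := (mkSU eps0 R0f B0).

Let ex_derive_R t : t1 < t < t2 -> ex_derive R0f t.
Proof. exact (fun H => R_smooth t 1 H). Qed.
Let ex_derive_B t : t1 < t < t2 -> ex_derive B0 (R0f t).
Proof. exact (fun H => B_smooth t 1 H). Qed.
Let ex_derive_dB t : t1 < t < t2 -> ex_derive (Derive B0) (R0f t).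
Proof. exact (fun H => B_smooth t 2 H). Qed.

Ltac eta_contract :=
  repeat (change (fun x : R => B0 x) with B0 in * );
  repeat (change (fun x : R => R0f x) with R0f in * );
  repeat (change (fun x : R => Derive B0 x) with (Derive B0) in * );
  repeat (change (fun x : R_AbsRing => Derive B0 x) with (Derive B0) in * ).

Definition Rp (q : pt) := R0f (q 0%nat).
Definition dRp (q : pt) := Derive R0f (q 0%nat).
Definition bp (q : pt) := B0 (Rp q).
Definition dbp (q : pt) := Derive B0 (Rp q).
Definition ddbp (q : pt) := Derive (Derive B0) (Rp q).
Definition alpha_den (q : pt) := 1 + bp q * w U q.
Definition alpha_num (q : pt) := 1 + (bp q - Rp q * dbp q) * w U q.

Lemma alpha_num_den q : alpha U q = alpha_num q / alpha_den q.
Proof. reflexivity. Qed.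
Lemma Om_num_den q : Om U q = Rp q / alpha_den q / Fden U q.
Proof. reflexivity. Qed.

(* d_k w = d_k (2z/F); the catch-all branch is d_z w. *)
Definition dw (k : nat) (q : pt) : R :=
  match k with
  | 1%nat => - (eps0 * q 1%nat * q 3%nat) / Fden U q ^ 2
  | 2%nat => - (eps0 * q 2%nat * q 3%nat) / Fden U q ^ 2
  | _ => 2 / Fden U q - eps0 * q 3%nat ^ 2 / Fden U q ^ 2
  end.
(* d_k d_l w, valid only for k <> l. *)
Definition ddw (k l : nat) (q : pt) : R :=
  match k, l with
  | 1%nat, 2%nat | 2%nat, 1%nat => eps0 ^ 2 * q 1%nat * q 2%nat * q 3%nat / Fden U q ^ 3
  | 1%nat, 3%nat | 3%nat, 1%nat =>
      - (eps0 * q 1%nat) / Fden U q ^ 2 + eps0 ^ 2 * q 1%nat * q 3%nat ^ 2 / Fden U q ^ 3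
  | _, _ => - (eps0 * q 2%nat) / Fden U q ^ 2 + eps0 ^ 2 * q 2%nat * q 3%nat ^ 2 / Fden U q ^ 3
  end.
Definition dalpha (k : nat) (q : pt) : R :=
  match k with
  | 0%nat => dRp q * (- (Rp q * ddbp q * w U q) * alpha_den q - alpha_num q * dbp q * w U q)
               / alpha_den q ^ 2
  | _ => (bp q - Rp q * dbp q - bp q) * dw k q / alpha_den q ^ 2
  end.
Definition dOm (k : nat) (q : pt) : R :=
  match k with
  | 0%nat => dRp q * alpha_num q / (alpha_den q ^ 2 * Fden U q)
  | _ => - (Rp q * bp q * dw k q) / (alpha_den q ^ 2 * Fden U q)
         - Rp q * (eps0 * q k / 2) / (alpha_den q * Fden U q ^ 2)
  end.

Definition regular (q : pt) :=
  t1 < q 0%nat < t2 /\ Fden U q <> 0 /\ alpha_den q <> 0 /\ alpha_num q <> 0.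

Lemma regular_of_InD q : InD U t1 t2 q -> regular q.
Proof.
  intros [Ht [HF [HD Hal]]]. split; [exact Ht|]. split; [exact HF|]. split; [exact HD|].
  intro HN.
  rewrite alpha_num_den, HN in Hal. unfold Rdiv in Hal. rewrite Rmult_0_l in Hal. lra.
Qed.

Lemma alpha_Om_neq0 q : regular q -> alpha U q <> 0 /\ Om U q <> 0.
Proof.
  intros [Ht [HF [HD HN]]]. pose proof (R_pos _ Ht).
  rewrite alpha_num_den, Om_num_den. unfold Rp. split; unfold Rdiv; neq0; lra.
Qed.

Lemma is_derive_Fden k q : (1 <= k < 4)%nat ->
  is_derive (coord_line (Fden U) q k) (q k) (eps0 * q k / 2).
Proof.
  intro Hk. destruct k as [|[|[|[|]]]]; try lia; unfold coord_line, Fden, r2;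
  cbv [upd Nat.eqb eps]; auto_derive; auto; field.
Qed.

Lemma is_derive_w k q : (1 <= k < 4)%nat -> Fden U q <> 0 ->
  is_derive (coord_line (w U) q k) (q k) (dw k q).
Proof.
  intros Hk HF. destruct k as [|[|[|[|]]]]; try lia;
  unfold coord_line, w, dw, Fden, r2 in *; cbv [upd Nat.eqb eps] in *;
  auto_derive; cbv [pow] in *; side_conditions; field; auto; intro Hc; apply HF; nra.
Qed.

Lemma is_derive_dw k l q : (1 <= k < 4)%nat -> (1 <= l < 4)%nat -> k <> l -> Fden U q <> 0 ->
  is_derive (coord_line (dw k) q l) (q l) (ddw k l q).
Proof.
  intros Hk Hl Hkl HF. destruct k as [|[|[|[|]]]]; try lia; destruct l as [|[|[|[|]]]]; try lia;
  unfold coord_line, ddw, dw, Fden, r2 in *; cbv [upd Nat.eqb eps] in *;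
  auto_derive; cbv [pow] in *; side_conditions; field; auto; intro Hc; apply HF; nra.
Qed.

Lemma ddw_sym k l q : (1 <= k < 4)%nat -> (1 <= l < 4)%nat -> ddw k l q = ddw l k q.
Proof.
  intros Hk Hl. destruct k as [|[|[|[|]]]]; try lia; destruct l as [|[|[|[|]]]]; try lia;
  reflexivity.
Qed.

Lemma is_derive_alpha k q : regular q -> (k < 4)%nat ->
  is_derive (coord_line (alpha U) q k) (q k) (dalpha k q).
Proof.
  intros [Ht [HF [HD HN]]] Hk.
  pose proof (ex_derive_R _ Ht). pose proof (ex_derive_B _ Ht). pose proof (ex_derive_dB _ Ht).
  destruct k as [|k].
  - eapply is_derive_ext with (f := fun s =>
      (1 + (B0 (R0f s) - R0f s * Derive B0 (R0f s)) * w U q) / (1 + B0 (R0f s) * w U q));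
      [intro s; reflexivity|].
    unfold alpha_den, alpha_num, bp, dbp, ddbp, Rp, dRp in *.
    auto_derive; eta_contract; [side_conditions|].
    unfold dalpha, alpha_den, alpha_num, bp, dbp, ddbp, Rp, dRp. field; auto.
  - assert (Hk' : (1 <= S k < 4)%nat) by lia.
    pose proof (is_derive_mobius _ _ _ (bp q) (bp q - Rp q * dbp q) (is_derive_w (S k) q Hk' HF))
      as G.
    destruct k as [|[|[|]]]; try lia; (eapply is_derive_ext; [|exact (G HD)]); intro s; reflexivity.
Qed.

Lemma is_derive_Om k q : regular q -> (k < 4)%nat ->
  is_derive (coord_line (Om U) q k) (q k) (dOm k q).
Proof.
  intros [Ht [HF [HD HN]]] Hk. pose proof (ex_derive_R _ Ht). pose proof (ex_derive_B _ Ht).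
  destruct k as [|k].
  - eapply is_derive_ext with (f := fun s => R0f s / (1 + B0 (R0f s) * w U q) / Fden U q);
      [intro s; reflexivity|].
    unfold alpha_den, alpha_num, bp, dbp, Rp, dRp in *.
    auto_derive; eta_contract; [side_conditions|].
    unfold dOm, alpha_den, alpha_num, bp, dbp, Rp, dRp. field; auto.
  - assert (Hk' : (1 <= S k < 4)%nat) by lia.
    pose proof (is_derive_conformal _ _ _ _ _ (bp q) (Rp q)
      (is_derive_w (S k) q Hk' HF) (is_derive_Fden (S k) q Hk')) as G.
    destruct k as [|[|[|]]]; try lia; (eapply is_derive_ext; [|exact (G HD HF)]); intro s; reflexivity.
Qed.

Lemma alpha_derivable_at q : regular q ->
  forall k, (k < 4)%nat -> ex_derive (coord_line (alpha U) q k) (q k).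
Proof. intros Hq k Hk. exists (dalpha k q). apply is_derive_alpha; auto. Qed.
Lemma Om_derivable_at q : regular q ->
  forall k, (k < 4)%nat -> ex_derive (coord_line (Om U) q k) (q k).
Proof. intros Hq k Hk. exists (dOm k q). apply is_derive_Om; auto. Qed.

Definition omega1_coord (nu : nat) (q : pt) : R :=
  match nu with 0%nat => dOm 0 q / Om U q | _ => dalpha nu q / alpha U q end.

Lemma omega1_coord_eq q nu : regular q -> (nu < 4)%nat -> omega1 U nu q = omega1_coord nu q.
Proof.
  intros Hq Hn. destruct (alpha_Om_neq0 q Hq) as [HA HW].
  rewrite (omega1_diag U q (alpha_derivable_at q Hq) (Om_derivable_at q Hq) HA HW nu Hn).
  destruct nu as [|nu]; simpl Nat.eqb; cbv iota; rewrite pd_coord_line.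
  - rewrite (is_derive_unique _ _ _ (is_derive_Om 0 q Hq ltac:(lia))). reflexivity.
  - rewrite (is_derive_unique _ _ _ (is_derive_alpha (S nu) q Hq Hn)). reflexivity.
Qed.

Lemma regular_near q mu : regular q -> (mu < 4)%nat ->
  locally (q mu) (fun s => regular (upd q mu s)).
Proof.
  intros Hq Hm. pose proof Hq as [Ht [HF [HD HN]]].
  pose proof (ex_derive_R _ Ht). pose proof (ex_derive_B _ Ht). pose proof (ex_derive_dB _ Ht).
  destruct mu as [|mu].
  - assert (E1 : locally (q 0%nat) (fun s => alpha_den (upd q 0 s) <> 0)).
    { apply (locally_neq0 (fun s => 1 + B0 (R0f s) * w U q)); [|exact HD].
      auto_derive. eta_contract. side_conditions. }
    assert (E2 : locally (q 0%nat) (fun s => alpha_num (upd q 0 s) <> 0)).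
    { apply (locally_neq0 (fun s => 1 + (B0 (R0f s) - R0f s * Derive B0 (R0f s)) * w U q));
        [|exact HN].
      auto_derive. eta_contract. side_conditions. }
    pose proof (locally_open_interval _ _ _ Ht) as E3.
    apply (filter_imp (fun s =>
      (t1 < s < t2 /\ alpha_den (upd q 0 s) <> 0) /\ alpha_num (upd q 0 s) <> 0)).
    + intros s [[H3 H4] H5]. split; [exact H3|]. split; [exact HF|]. split; assumption.
    + apply filter_and; [apply filter_and|]; assumption.
  - assert (Hk : (1 <= S mu < 4)%nat) by lia.
    assert (Hw : ex_derive (coord_line (w U) q (S mu)) (q (S mu)))
      by (exists (dw (S mu) q); apply is_derive_w; auto).
    assert (E0 : locally (q (S mu)) (fun s => Fden U (upd q (S mu) s) <> 0)).
    { apply (locally_neq0 (coord_line (Fden U) q (S mu)));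
        [exists (eps0 * q (S mu) / 2); apply is_derive_Fden; auto|].
      unfold coord_line; rewrite upd_id; exact HF. }
    assert (E1 : locally (q (S mu)) (fun s => alpha_den (upd q (S mu) s) <> 0)).
    { apply (locally_neq0 (fun s => 1 + bp q * coord_line (w U) q (S mu) s)).
      - auto_derive. exact Hw.
      - unfold coord_line; rewrite upd_id; exact HD. }
    assert (E2 : locally (q (S mu)) (fun s => alpha_num (upd q (S mu) s) <> 0)).
    { apply (locally_neq0 (fun s => 1 + (bp q - Rp q * dbp q) * coord_line (w U) q (S mu) s)).
      - auto_derive. exact Hw.
      - unfold coord_line; rewrite upd_id; exact HN. }
    apply (filter_imp (fun s => (Fden U (upd q (S mu) s) <> 0 /\
      alpha_den (upd q (S mu) s) <> 0) /\ alpha_num (upd q (S mu) s) <> 0)).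
    + intros s [[H3 H4] H5]. split; [exact Ht|]. split; [exact H3|]. split; assumption.
    + apply filter_and; [apply filter_and|]; assumption.
Qed.

(* omega1 agrees with omega1_coord on a neighbourhood, hence so do its derivatives. *)
Lemma pd_omega1 q mu nu : regular q -> (mu < 4)%nat -> (nu < 4)%nat ->
  pd mu (omega1 U nu) q = Derive (coord_line (omega1_coord nu) q mu) (q mu).
Proof.
  intros Hq Hm Hn. rewrite pd_coord_line. apply Derive_ext_loc.
  apply (filter_imp (fun s => regular (upd q mu s))); [|apply regular_near; auto].
  intros s Hs. apply omega1_coord_eq; auto.
Qed.

Lemma is_derive_omega1_time_space q k : regular q -> (1 <= k < 4)%nat ->
  is_derive (coord_line (omega1_coord 0) q k) (q k)
    (dRp q / Rp q * ((bp q - Rp q * dbp q) - bp q) * dw k q / alpha_den q ^ 2).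
Proof.
  intros Hq Hk. pose proof Hq as [Ht [HF [HD HN]]]. pose proof (R_pos _ Ht).
  pose proof (is_derive_log_conformal _ _ _ _ _ (dRp q) (bp q) (bp q - Rp q * dbp q) (Rp q)
     (is_derive_w k q Hk HF) (is_derive_Fden k q Hk)) as G.
  destruct k as [|[|[|[|]]]]; try lia;
  (eapply is_derive_ext; [|exact (G HD HF ltac:(unfold Rp; lra))]); intro s; reflexivity.
Qed.

Lemma is_derive_omega1_space_space q k l : regular q ->
  (1 <= k < 4)%nat -> (1 <= l < 4)%nat -> k <> l ->
  is_derive (coord_line (omega1_coord k) q l) (q l)
   (((bp q - Rp q * dbp q) - bp q)
      * (ddw k l q * (alpha_den q * alpha_num q)
         - dw k q * dw l q * (bp q * alpha_num q + (bp q - Rp q * dbp q) * alpha_den q))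
     / (alpha_den q * alpha_num q) ^ 2).
Proof.
  intros Hq Hk Hl Hkl. pose proof Hq as [Ht [HF [HD HN]]].
  pose proof (is_derive_log_mobius _ _ _ _ _ ((bp q - Rp q * dbp q) - bp q) (bp q)
     (bp q - Rp q * dbp q) (is_derive_w l q Hl HF) (is_derive_dw k l q Hk Hl Hkl HF)) as G.
  destruct k as [|[|[|[|]]]]; try lia; destruct l as [|[|[|[|]]]]; try lia;
  (eapply is_derive_ext; [|exact (G HD HN)]); intro s; reflexivity.
Qed.

Lemma is_derive_omega1_space_time q k : regular q -> (1 <= k < 4)%nat ->
  is_derive (coord_line (omega1_coord k) q 0) (q 0%nat)
   (dRp q * dw k q * (- (dbp q + Rp q * ddbp q) * (alpha_den q * alpha_num q)
      + Rp q * dbp q * (dbp q * w U q * alpha_num q - alpha_den q * Rp q * ddbp q * w U q))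
    / (alpha_den q * alpha_num q) ^ 2).
Proof.
  intros Hq Hk. pose proof Hq as [Ht [HF [HD HN]]].
  pose proof (ex_derive_R _ Ht). pose proof (ex_derive_B _ Ht). pose proof (ex_derive_dB _ Ht).
  destruct k as [|k]; [lia|].
  eapply is_derive_ext with (f := fun s =>
    ((B0 (R0f s) - R0f s * Derive B0 (R0f s) - B0 (R0f s)) * dw (S k) q
       / (1 + B0 (R0f s) * w U q) ^ 2)
    / ((1 + (B0 (R0f s) - R0f s * Derive B0 (R0f s)) * w U q) / (1 + B0 (R0f s) * w U q)));
    [intro s; reflexivity|].
  unfold alpha_den, alpha_num, bp, dbp, ddbp, Rp, dRp in *.
  generalize (dw (S k) q); intro d.
  auto_derive; eta_contract; [side_conditions|]. field; auto.
Qed.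

Lemma dform_time_space q k : regular q -> (1 <= k < 4)%nat ->
  dform U 0 k q = - (dRp q * Rp q * ddbp q * dw k q) / alpha_num q ^ 2.
Proof.
  intros Hq Hk. pose proof Hq as [Ht [HF [HD HN]]]. pose proof (R_pos _ Ht).
  unfold dform. rewrite !pd_omega1 by (auto; lia).
  rewrite (is_derive_unique _ _ _ (is_derive_omega1_space_time q k Hq Hk)).
  rewrite (is_derive_unique _ _ _ (is_derive_omega1_time_space q k Hq Hk)).
  unfold alpha_den, alpha_num, bp, dbp, ddbp, Rp, dRp in *.
  field. repeat split; auto; lra.
Qed.

Lemma dform_space_space q k l : regular q -> (1 <= k < 4)%nat -> (1 <= l < 4)%nat ->
  dform U k l q = 0.
Proof.
  intros Hq Hk Hl. unfold dform. destruct (Nat.eq_dec k l) as [->|Hkl]; [ring|].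
  rewrite !pd_omega1 by (auto; lia).
  rewrite (is_derive_unique _ _ _ (is_derive_omega1_space_space q l k Hq Hl Hk ltac:(lia))).
  rewrite (is_derive_unique _ _ _ (is_derive_omega1_space_space q k l Hq Hk Hl Hkl)).
  rewrite (ddw_sym l k q Hl Hk). unfold Rdiv. ring.
Qed.

Lemma shear_dform_eq0 q mu nu : regular q -> ddbp q = 0 -> (mu < 4)%nat -> (nu < 4)%nat ->
  shear U mu nu q = 0 /\ dform U mu nu q = 0.
Proof.
  intros Hq Hb Hm Hn. destruct (alpha_Om_neq0 q Hq) as [HA HW]. split.
  - apply shear_eq0; auto; [apply alpha_derivable_at | apply Om_derivable_at]; auto.
  - destruct mu as [|mu]; destruct nu as [|nu].
    + unfold dform; ring.
    + rewrite dform_time_space, Hb by (auto; lia). unfold Rdiv; ring.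
    + replace (dform U (S mu) 0 q) with (- dform U 0 (S mu) q) by (unfold dform; ring).
      rewrite dform_time_space, Hb by (auto; lia). unfold Rdiv; ring.
    + apply dform_space_space; auto; lia.
Qed.

Definition axis_point (t : R) : pt := fun k => if Nat.eqb k 0 then t else 0.

Lemma Fden_axis t : Fden U (axis_point t) = 1.
Proof. unfold Fden, r2, axis_point; simpl; ring. Qed.
Lemma w_axis t : w U (axis_point t) = 0.
Proof. unfold w; rewrite Fden_axis; unfold axis_point; simpl; field. Qed.

Lemma InD_axis t : t1 < t < t2 -> InD U t1 t2 (axis_point t).
Proof.
  intro Ht. unfold InD, alpha. rewrite Fden_axis, w_axis, !Rmult_0_r, Rplus_0_r.
  unfold Rdiv; rewrite Rinv_1. split; [exact Ht|]. repeat split; lra.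
Qed.

Hypothesis dR_neq0 : forall t, t1 < t < t2 -> Derive R0f t <> 0.

(* On the axis w = 0 and d_z w = 2, so the (t,z) component reads -2 R' R b''. *)
Lemma ddB_eq0_of_dform_axis t : t1 < t < t2 -> dform U 0 3 (axis_point t) = 0 ->
  Derive_n B0 2 (R0f t) = 0.
Proof.
  intros Ht Hd. pose proof (dR_neq0 t Ht). pose proof (R_pos t Ht).
  rewrite dform_time_space in Hd by (auto; try lia; apply regular_of_InD, InD_axis; auto).
  unfold alpha_num, dw, ddbp, dRp, Rp in Hd. rewrite Fden_axis, w_axis in Hd.
  change (axis_point t 0%nat) with t in Hd. change (axis_point t 3%nat) with 0 in Hd. change (Derive_n B0 2) with (Derive (Derive B0)).
  assert (E : Derive R0f t * R0f t * Derive (Derive B0) (R0f t) = 0).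
  { apply (Rmult_eq_reg_r (-2)); [|lra].
    rewrite Rmult_0_l, <- Hd. field. }
  destruct (Rmult_integral _ _ E) as [E'|E']; [|exact E'].
  exfalso. destruct (Rmult_integral _ _ E'); lra.
Qed.

Lemma pd_ln_beta q mu : regular q -> 0 < alpha U q -> ddbp q = 0 -> (mu < 4)%nat ->
  pd mu (fun q' => ln (beta U q')) q = omega1 U mu q.
Proof.
  intros Hq Hal Hb Hm. pose proof Hq as [Ht [HF [HD HN]]]. pose proof (R_pos _ Ht) as HR.
  rewrite omega1_coord_eq, pd_coord_line by auto.
  destruct mu as [|mu].
  - destruct (ex_derive_R _ Ht) as [dR HdR].
    pose proof (is_derive_ln_mult _ _ _ _ _ HdR (is_derive_alpha 0 q Hq ltac:(lia))) as G.
    erewrite (is_derive_unique (coord_line (fun q' => ln (beta U q')) q 0));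
      [| eapply is_derive_ext; [|exact (G ltac:(apply Rmult_lt_0_compat; auto))];
         intro s; reflexivity].
    unfold coord_line; rewrite upd_id.
    replace dR with (dRp q) by (unfold dRp; apply is_derive_unique; auto).
    unfold omega1_coord, dalpha, dOm. rewrite Om_num_den, alpha_num_den in *.
    unfold alpha_den, alpha_num, bp, dbp, ddbp, Rp, dRp in *. rewrite Hb.
    field. repeat split; auto; lra.
  - pose proof (is_derive_ln_mult (fun _ => R0f (q 0%nat)) _ _ _ _ (is_derive_const _ _)
      (is_derive_alpha (S mu) q Hq Hm)) as G.
    destruct mu as [|[|[|]]]; try lia;
    (erewrite (is_derive_unique (coord_line (fun q' => ln (beta U q')) q _));
      [| eapply is_derive_ext; [|exact (G ltac:(apply Rmult_lt_0_compat; auto))];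
         intro s; reflexivity]);
    unfold coord_line; rewrite upd_id; unfold omega1_coord; change zero with 0;
    field; split; auto; lra.
Qed.

Section LinearB.
Variables b1 b2 aR Th0 R0 : R.
Hypothesis B_linear : forall t, t1 < t < t2 -> B0 (R0f t) = b1 + b2 * R0f t.

(* B is only known along the curve R(t); R' <> 0 lets us read off B' = b2 there. *)
Lemma dB_linear t : t1 < t < t2 -> Derive B0 (R0f t) = b2.
Proof.
  intro Ht. pose proof (ex_derive_R _ Ht). pose proof (ex_derive_B _ Ht).
  assert (E : Derive (fun s => B0 (R0f s)) t = Derive (fun s => b1 + b2 * R0f s) t).
  { apply Derive_ext_loc, (filter_imp (fun s => t1 < s < t2)); [|apply locally_open_interval; auto].
    intros s Hs. apply B_linear; auto. }
  rewrite Derive_comp in E by auto.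
  replace (Derive (fun s => b1 + b2 * R0f s) t) with (b2 * Derive R0f t) in E
    by (symmetry; apply is_derive_unique; auto_derive; auto; eta_contract; ring).
  pose proof (dR_neq0 _ Ht). apply (Rmult_eq_reg_l (Derive R0f t)); auto. lra.
Qed.

Lemma alpha_num_linear q : regular q -> alpha_num q = 1 + b1 * w U q.
Proof.
  intros [Ht _]. unfold alpha_num, bp, dbp, Rp. rewrite B_linear, dB_linear by auto. ring.
Qed.

Notation Theta := (Thetar U b1 b2 Th0 R0).
Notation rho_r := (fun q => aR * Theta q ^ 4).
Notation p_r := (fun q => aR * Theta q ^ 4 / 3).

Definition dTheta (k : nat) (q : pt) : R :=
  match k with
  | 0%nat => - (Th0 * R0 * dRp q) / Rp q ^ 2
  | _ => Th0 * R0 * b2 * dw k q / (1 + b1 * w U q) ^ 2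
  end.

Lemma is_derive_Theta k q : regular q -> (k < 4)%nat ->
  is_derive (coord_line Theta q k) (q k) (dTheta k q).
Proof.
  intros Hq Hk. pose proof Hq as [Ht [HF [HD HN]]]. pose proof (R_pos _ Ht) as HR.
  pose proof (ex_derive_R _ Ht). rewrite (alpha_num_linear q Hq) in HN.
  destruct k as [|k].
  - eapply is_derive_ext with (f := fun s =>
      Th0 * R0 / R0f s * (1 + b2 * w U q * R0f s / (1 + b1 * w U q)));
      [intro s; reflexivity|].
    auto_derive; eta_contract; [repeat split; auto; lra|].
    unfold dTheta, dRp, Rp. field. split; auto; lra.
  - assert (Hk' : (1 <= S k < 4)%nat) by lia.
    pose proof (is_derive_temperature _ _ _ (Th0 * R0) b1 b2 (Rp q)
       (is_derive_w (S k) q Hk' HF)) as G.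
    destruct k as [|[|[|]]]; try lia;
    (eapply is_derive_ext; [|exact (G HN ltac:(unfold Rp; lra))]); intro s; reflexivity.
Qed.

Lemma is_derive_rho_r k q : regular q -> (k < 4)%nat ->
  is_derive (coord_line rho_r q k) (q k) (aR * 4 * Theta q ^ 3 * dTheta k q).
Proof.
  intros Hq Hk. pose proof (is_derive_pow4 _ _ _ aR (is_derive_Theta k q Hq Hk)) as G.
  unfold coord_line in G at 2. rewrite upd_id in G.
  eapply is_derive_ext; [|exact G]; intro s; reflexivity.
Qed.

Lemma is_derive_p_r k q : regular q -> (k < 4)%nat ->
  is_derive (coord_line p_r q k) (q k) (aR / 3 * 4 * Theta q ^ 3 * dTheta k q).
Proof.
  intros Hq Hk. pose proof (is_derive_pow4 _ _ _ (aR / 3) (is_derive_Theta k q Hq Hk)) as G.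
  unfold coord_line in G at 2. rewrite upd_id in G.
  eapply is_derive_ext; [|exact G]; intro s; unfold coord_line; simpl; field.
Qed.

Lemma divT_radiation_eq0 q nu : regular q -> (nu < 4)%nat -> divT U (Tup U rho_r p_r) nu q = 0.
Proof.
  intros Hq Hn. pose proof Hq as [Ht [HF [HD HN]]]. pose proof (R_pos _ Ht) as HR.
  destruct (alpha_Om_neq0 q Hq) as [HA HW].
  rewrite divT_diag; auto;
    [| apply alpha_derivable_at | apply Om_derivable_at
     | intros k Hk; eexists; apply is_derive_rho_r
     | intros k Hk; eexists; apply is_derive_p_r]; auto.
  destruct nu as [|nu]; simpl Nat.eqb; cbv iota; rewrite !pd_coord_line.
  - rewrite (is_derive_unique _ _ _ (is_derive_rho_r 0 q Hq ltac:(lia))).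
    rewrite (is_derive_unique _ _ _ (is_derive_Om 0 q Hq ltac:(lia))).
    rewrite Om_num_den in *. unfold dTheta, dOm, Thetar. rewrite (alpha_num_linear q Hq) in *.
    unfold alpha_den, bp, Rp, dRp, Rt in *. simpl B in *. simpl Rf in *.
    rewrite B_linear in * by auto. field. repeat split; auto; lra.
  - rewrite (is_derive_unique _ _ _ (is_derive_p_r (S nu) q Hq Hn)).
    rewrite (is_derive_unique _ _ _ (is_derive_alpha (S nu) q Hq Hn)).
    rewrite alpha_num_den in *. unfold dTheta, dalpha, Thetar. rewrite (alpha_num_linear q Hq) in *.
    unfold alpha_den, bp, dbp, Rp, dRp, Rt in *. simpl B in *. simpl Rf in *.
    rewrite B_linear, dB_linear in * by auto. field. repeat split; auto; lra.
Qed.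

End LinearB.
End Stephani.

Theorem mainTheorem12 (eps0 : R) (R0f B0 : R -> R) (t1 t2 : R) :
  (eps0 = 0 \/ eps0 = 1 \/ eps0 = -1) ->
  t1 < t2 ->
  (forall t, t1 < t < t2 -> 0 < R0f t) ->
  (forall t n, t1 < t < t2 -> ex_derive_n R0f n t) ->
  (forall t, t1 < t < t2 -> Derive R0f t <> 0) ->
  (forall t n, t1 < t < t2 -> ex_derive_n B0 n (R0f t)) ->
  let S := mkSU eps0 R0f B0 in
  ( (forall p, InD S t1 t2 p -> forall mu nu, (mu < 4)%nat -> (nu < 4)%nat ->
        shear S mu nu p = 0 /\ dform S mu nu p = 0)
    <-> (forall t, t1 < t < t2 -> Derive_n B0 2 (R0f t) = 0) )
  /\
  ( (forall t, t1 < t < t2 -> Derive_n B0 2 (R0f t) = 0) ->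
    forall p, InD S t1 t2 p -> forall mu, (mu < 4)%nat ->
      pd mu (fun q => ln (beta S q)) p = omega1 S mu p )
  /\
  ( forall b1 b2 aR Th0 R0 : R,
      (forall t, t1 < t < t2 -> B0 (R0f t) = b1 + b2 * R0f t) ->
      let rho := fun q => aR * Thetar S b1 b2 Th0 R0 q ^ 4 in
      let pr := fun q => rho q / 3 in
      forall p, InD S t1 t2 p -> forall nu, (nu < 4)%nat ->
        divT S (Tup S rho pr) nu p = 0 ).
Proof.
  intros _ _ HRpos HRd HRnz HBd S; unfold S; clear S.
  assert (Hreg : forall p, InD (mkSU eps0 R0f B0) t1 t2 p -> regular eps0 R0f B0 t1 t2 p)
    by apply regular_of_InD.
  split; [split|split].
  - intros H t Ht. apply (ddB_eq0_of_dform_axis eps0 R0f B0 t1 t2 HRpos HRd HBd HRnz t Ht).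
    apply (H _ (InD_axis eps0 R0f B0 t1 t2 t Ht)); lia.
  - intros H p Hp mu nu Hm Hn.
    apply (shear_dform_eq0 eps0 R0f B0 t1 t2 HRpos HRd HBd); auto.
    exact (H _ (proj1 (Hreg p Hp))).
  - intros H p Hp mu Hm.
    apply (pd_ln_beta eps0 R0f B0 t1 t2 HRpos HRd HBd); auto; [apply Hp|].
    exact (H _ (proj1 (Hreg p Hp))).
  - intros b1 b2 aR Th0 R0 HB; cbv zeta; intros p Hp nu Hn.
    apply (divT_radiation_eq0 eps0 R0f B0 t1 t2 HRpos HRd HBd HRnz b1 b2); auto.
Qed.
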